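(* Consider the two-armed Gaussian bandit with two candidate models described in the context, under disagreement $\phi(\nu)=1$, $\phi(\gamma)=2$, with $\Delta_1>0>\Delta_2$. Then the pairs $(1,\delta_\nu)$ and $(2,\delta_\gamma)$ are strict Berk–Nash equilibria: for each pair $(a^*,\mu^* )$, the action $a^*$ is the unique maximizer of $\sum_{\theta}\mu^*(\theta)\theta_a$ over $a\in\{1,2\}$, and $\mu^*$ assigns probability one to the unique minimizer over $\theta\in\{\nu,\gamma\}$ of $\mathrm{KL}\big(g(\cdot\mid a^* )\,\|\,f_\theta(\cdot\mid a^* )\big)$.
   Context: Actions are $\mathcal A=\{1,2\}$. True environment: $R\mid A=i\sim g(\cdot\mid i)=\mathcal N(g(i),1)$. Two candidate models $\nu=(\nu_1,\nu_2)$, $\gamma=(\gamma_1,\gamma_2)\in\mathbb R^2$; under model $\theta$, $R\mid A=i\sim f_\theta(\cdot\mid i)=\mathcal N(\theta_i,1)$; $\phi(\theta)=\arg\max_i\theta_i$ (assumed unique). $\Delta_i:=\mathbb E_{R\sim g(\cdot\mid i)}[\log f_\nu(R\mid i)-\log f_\gamma(R\mid i)]=\mathrm{KL}(g(\cdot\mid i)\|f_\gamma(\cdot\mid i))-\mathrm{KL}(g(\cdot\mid i)\|f_\nu(\cdot\mid i))$. $\delta_\theta$ denotes the point-mass belief on model $\theta$. *)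

From HB Require Import structures.
From mathcomp Require Import all_boot all_order all_algebra.
From mathcomp Require Import all_classical all_reals all_analysis.
Set Implicit Arguments. Unset Strict Implicit. Unset Printing Implicit Defensive.
Import Order.TTheory GRing.Theory Num.Theory.
Local Open Scope ring_scope.

Inductive action := A1 | A2.
Inductive model := Nu | Gamma.

Section Defs.
Context {R : realType}.

Definition KL (p q : R -> R) : \bar R :=
  (\int[@lebesgue_measure R]_x (p x * ln (p x / q x))%:E)%E.

Definition gauss (m : R) : R -> R := normal_pdf m 1.

(* KL( g(.|a) || f_theta(.|a) ), with g(.|a) = N(g a,1), f_theta(.|a) = N(theta a,1). *)
Definition KL_model (g theta : action -> R) (a : action) : \bar R :=
  KL (gauss (g a)) (gauss (theta a)).

Definition Delta (g nu gamma : action -> R) (i : action) : \bar R :=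
  (KL_model g gamma i - KL_model g nu i)%E.

Definition is_unique_argmax (f : action -> R) (a : action) : Prop :=
  forall b, b <> a -> f b < f a.

Definition param (nu gamma : action -> R) (th : model) : action -> R :=
  match th with Nu => nu | Gamma => gamma end.

Definition dirac_belief (th0 : model) : model -> R :=
  fun th => match th, th0 with
            | Nu, Nu => 1
            | Gamma, Gamma => 1
            | _, _ => 0
            end.

Definition belief_mean (nu gamma : action -> R) (mu : model -> R) (a : action) : R :=
  mu Nu * nu a + mu Gamma * gamma a.

Definition strict_BNE (g nu gamma : action -> R) (a : action) (mu : model -> R) : Prop :=
  is_unique_argmax (belief_mean nu gamma mu) a /\
  exists th0 : model,
    (forall th, th <> th0 ->
       (KL_model g (param nu gamma th0) a < KL_model g (param nu gamma th) a)%E)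
    /\ mu th0 = 1.

End Defs.

(* Under a point-mass belief the expected mean reward of an action is the
   parameter of the believed model, so the action condition of a strict
   Berk-Nash equilibrium is exactly phi(nu) = 1, resp. phi(gamma) = 2.  For the
   belief condition, the KL divergence between two unit-variance Gaussians is
   finite: the log-likelihood ratio L is a quadratic polynomial and
   gauss m * |L| <= gauss m * (e^L + e^-L), where both terms on the right are
   multiples of Gaussian densities.  Hence the signs of Delta_1 and Delta_2 are
   genuine strict comparisons of finite KL divergences. *)
From mathcomp Require Import all_boot all_order all_algebra.
From mathcomp Require Import all_classical all_reals all_analysis.
From mathcomp Require Import measurable_realfun normal_distribution ring lra.
Import Order.TTheory GRing.Theory Num.Theory.
Local Open Scope ring_scope.

Lemma normr_le_expRD_expRN {R : realType} (t : R) : `|t| <= expR t + expR (- t).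
Proof.
have := expR_ge1Dx t; have := expR_ge1Dx (- t).
have := expR_gt0 t; have := expR_gt0 (- t).
by case: (lerP 0 t) => t0; [rewrite ger0_norm | rewrite ltr0_norm]; lra.
Qed.

Section gauss_KL.
Context {R : realType}.
Implicit Types m a x : R.

Definition gauss_log_ratio m a x : R := ((x - a) ^+ 2 - (x - m) ^+ 2) / 2.

Lemma gaussE m x : gauss m x = normal_peak 1 * expR (- (x - m) ^+ 2 / 2).
Proof. by rewrite /gauss /normal_pdf oner_eq0 /normal_fun expr1n. Qed.

Lemma gauss_gt0 m x : 0 < gauss m x.
Proof. by rewrite gaussE mulr_gt0 ?expR_gt0 ?normal_peak_gt0 ?oner_eq0. Qed.

Lemma ln_gauss_ratio m a x :
  ln (gauss m x / gauss a x) = gauss_log_ratio m a x.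
Proof.
rewrite !gaussE invfM mulrACA divff ?gt_eqF ?normal_peak_gt0 ?oner_eq0 // mul1r.
by rewrite -expRN -expRD expRK /gauss_log_ratio; field.
Qed.

Lemma gauss_mul_expR_log_ratio m a x :
  gauss m x * expR (gauss_log_ratio m a x) =
  expR ((m - a) ^+ 2) * gauss (2 * m - a) x.
Proof.
rewrite !gaussE mulrCA -mulrA -!expRD /gauss_log_ratio.
by congr (_ * expR _); field.
Qed.

Lemma gauss_mul_expRN_log_ratio m a x :
  gauss m x * expR (- gauss_log_ratio m a x) = gauss a x.
Proof.
rewrite !gaussE -mulrA -!expRD /gauss_log_ratio.
by congr (_ * expR _); field.
Qed.

Lemma measurable_gauss_log_ratio m a :
  measurable_fun setT (gauss_log_ratio m a).
Proof.
apply: measurable_funM => //.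
by apply: measurable_funB; apply: measurable_funX; apply: measurable_funB.
Qed.

Lemma integrable_gauss m :
  (@lebesgue_measure R).-integrable setT (fun x => (gauss m x)%:E).
Proof. exact: integrable_normal_pdf. Qed.

Lemma KL_gauss_fin_num m a : KL (gauss m) (gauss a) \is a fin_num.
Proof.
rewrite /KL; under eq_fun do rewrite ln_gauss_ratio.
apply: integrable_fin_num => //.
pose dom x := (expR ((m - a) ^+ 2) * gauss (2 * m - a) x + gauss a x)%:E.
have dom_integrable : (@lebesgue_measure R).-integrable setT dom.
  rewrite /dom; under eq_fun do rewrite EFinD EFinM.
  apply: (integrableD measurableT); last exact: integrable_gauss.
  exact/integrableZl/integrable_gauss.
apply: (le_integrable measurableT _ _ dom_integrable).
  apply/measurable_EFinP/measurable_funM; last exact: measurable_gauss_log_ratio.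
  exact: measurable_normal_pdf.
move=> x _; rewrite /dom lee_fin [leRHS]ger0_norm; last first.
  by rewrite addr_ge0 ?mulr_ge0 ?expR_ge0 // ltW // gauss_gt0.
rewrite normrM (gtr0_norm (gauss_gt0 _ _)) -gauss_mul_expR_log_ratio -(gauss_mul_expRN_log_ratio m a x) -mulrDr.
by rewrite ler_pM2l ?gauss_gt0 // normr_le_expRD_expRN.
Qed.

End gauss_KL.

Lemma belief_mean_dirac {R : realType} (nu gamma : action -> R) (th : model) :
  belief_mean nu gamma (dirac_belief th) = param nu gamma th.
Proof.
by apply/funext => a; case: th; rewrite /belief_mean /= !mul1r !mul0r ?addr0 ?add0r.
Qed.

Lemma strict_BNE_dirac {R : realType} (g nu gamma : action -> R)
    (a : action) (th : model) :
  is_unique_argmax (param nu gamma th) a ->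
  (forall th', th' <> th ->
     (KL_model g (param nu gamma th) a < KL_model g (param nu gamma th') a)%E) ->
  strict_BNE g nu gamma a (dirac_belief th).
Proof.
move=> argmax_th KL_min; split; first by rewrite belief_mean_dirac.
by exists th; split => //; case: th {argmax_th KL_min}.
Qed.

Theorem corollary1 (R : realType) (g nu gamma : action -> R)
  (hnu : is_unique_argmax nu A1) (hgamma : is_unique_argmax gamma A2)
  (hD1 : (0 < Delta g nu gamma A1)%E) (hD2 : (Delta g nu gamma A2 < 0)%E) :
  strict_BNE g nu gamma A1 (dirac_belief Nu) /\
  strict_BNE g nu gamma A2 (dirac_belief Gamma).
Proof.
split; apply: strict_BNE_dirac => //.
- by case=> // _; rewrite -sube_gt0.
(* Unlike [sube_gt0], [sube_lt0] needs finiteness: [+oo - +oo = -oo < 0]. *)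
- by case=> // _; rewrite -sube_lt0 ?KL_gauss_fin_num.
Qed.
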